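(* Let $G$ be a digraph and $v\to w\in E(G)$. Then $v\to w$ is disimplicial in $G$ if and only if $(\mathrm{repr}(\mathrm{out}(v)),\mathrm{repr}(\mathrm{in}(w)))$ is a vertex of $\mathrm{Join}(\mathrm{Repr}(\mathrm{Split}(G)))$ and this vertex is transitive there.
   Context: A digraph is a finite vertex set $V$ with arc set $E\subseteq V\times V$. $N^+(v),N^-(v)$ denote out-/in-neighborhoods, $N(v)=N^+(v)\cup N^-(v)$, $d(v)=|N(v)|$. Source: $N^-(v)=\emptyset$; sink: $N^+(v)=\emptyset$; ST graph: every vertex is a source or a sink. An arc $v\to w$ is disimplicial if $x\to y$ is an arc for all $x\in N^-(w)$, $y\in N^+(v)$; a vertex $u$ is transitive if $x\to y$ is an arc for all $x\in N^-(u)$, $y\in N^+(u)$. $\mathrm{Split}(G)$ is the ST graph with a vertex $\mathrm{out}(v)$ for each non-sink $v$ of $G$ and a vertex $\mathrm{in}(w)$ for each non-source $w$ (all distinct), $\mathrm{out}(v)\to\mathrm{in}(w)$ an arc iff $v\to w\in E(G)$, no other arcs. In an ST graph $H$, vertices with equal $N(\cdot)$ are twins; twin blocks are the classes of this equivalence; $\mathrm{repr}$ picks one vertex of each block ($\mathrm{repr}(u)$ is the chosen vertex of $u$'s block), and $\mathrm{Repr}(H)$ is the subdigraph induced by the chosen vertices. In a digraph $H$, the thin neighbor $\theta(u)$ of $u$ is the unique $x\in N(u)$ with $d(x)<d(z)$ for all $z\in N(u)\setminus\{x\}$ (undefined if no such $x$); an arc $a\to b$ is thin if $\theta(a)=b$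 and $\theta(b)=a$. The thin arcs form a matching (no two share an endpoint). For a matching $M$ with endpoint set $V(M)$, $\mathrm{Join}(H,M)$ has a vertex $(u,u)$ for each $u\notin V(M)$ and a vertex $(a,b)$ for each $a\to b\in M$, with $(a,b)\to(x,y)$ an arc iff $a\to y\in E(H)$. $\mathrm{Join}(H)$ denotes $\mathrm{Join}(H,M)$ for $M$ the set of thin arcs of $H$. *)

From HB Require Import structures.
From mathcomp Require Import all_boot.
Set Implicit Arguments. Unset Strict Implicit. Unset Printing Implicit Defensive.

Record digraph := Digraph { vert : finType; edge : rel vert }.

Section Defs.
Variable G : digraph.

Definition outN (v : vert G) : {set vert G} := [set y | edge v y].
Definition inN (v : vert G) : {set vert G} := [set x | edge x v].
Definition nbhd (v : vert G) : {set vert G} := outN v :|: inN v.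
Definition deg (v : vert G) : nat := #|nbhd v|.

Definition is_source (v : vert G) : bool := inN v == set0.
Definition is_sink (v : vert G) : bool := outN v == set0.

Definition disimplicial (v w : vert G) : Prop :=
  forall x y, x \in inN w -> y \in outN v -> edge x y.

Definition transitive_vertex (u : vert G) : Prop :=
  forall x y, x \in inN u -> y \in outN u -> edge x y.

Definition thin_nb (u x : vert G) : bool :=
  (x \in nbhd u) && [forall z in nbhd u, (z != x) ==> (deg x < deg z)].

Definition thin_arc (a b : vert G) : bool :=
  [&& edge a b, thin_nb a b & thin_nb b a].

Definition in_thin_matching (u : vert G) : bool :=
  [exists x, thin_arc u x || thin_arc x u].

(* Twin-block representative functions on a digraph (used on ST graphs):
   r picks, for each vertex, a vertex of its twin block (same N),
   and the choice depends only on the block. *)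
Definition is_repr (r : vert G -> vert G) : Prop :=
  (forall u, nbhd (r u) = nbhd u) /\
  (forall u u', nbhd u = nbhd u' -> r u = r u').

End Defs.

(* DSplit(G): vertices out(v) = inl v for non-sinks v, in(w) = inr w for
   non-sources w; arcs out(v) -> in(w) iff v -> w. *)
Definition split_ok (G : digraph) (x : vert G + vert G) : bool :=
  match x with inl v => ~~ is_sink v | inr w => ~~ is_source w end.

Definition split_vert (G : digraph) := {x : vert G + vert G | split_ok x}.

Definition split_arc (G : digraph) : rel (split_vert G) :=
  fun a b => match val a, val b with
             | inl v, inr w => edge v w
             | _, _ => false
             end.

Definition DSplit (G : digraph) : digraph := @Digraph (split_vert G) (@split_arc G).

Definition repr_vert (H : digraph) (r : vert H -> vert H) := {u : vert H | r u == u}.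

Definition DRepr (H : digraph) (r : vert H -> vert H) : digraph :=
  @Digraph (repr_vert r) (fun a b => edge (val a) (val b)).

(* DJoin(H) = DJoin(H, M) with M the set of thin arcs of H. Vertices are the
   pairs (u,u) with u not in V(M) and the pairs (a,b) with a -> b in M. *)
Definition join_ok (H : digraph) (p : vert H * vert H) : bool :=
  ((p.1 == p.2) && ~~ in_thin_matching p.1) || thin_arc p.1 p.2.

Definition join_vert (H : digraph) := {p : vert H * vert H | join_ok p}.

Definition DJoin (H : digraph) : digraph :=
  @Digraph (join_vert H) (fun p q => edge (val p).1 (val q).2).

From HB Require Import structures.
From mathcomp Require Import all_boot.
Set Implicit Arguments. Unset Strict Implicit. Unset Printing Implicit Defensive.

(* Split(G) is an ST graph without isolated vertices in which out(v) -> in(w)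
   is disimplicial exactly when v -> w is. In such a graph, if s -> t is
   disimplicial then N(t) is contained in the neighbourhood of every
   neighbour of s and vice versa; after collapsing twins these inclusions
   become strict, so repr(s) and repr(t) are each other's thin neighbours and
   (repr s, repr t) is a vertex of the Join. Its in- and out-neighbours in the
   Join are read off from in(t) and out(s), so its transitivity is the
   disimpliciality of s -> t. Conversely every source (sink) of Repr(Split G)
   is the first (second) coordinate of some Join vertex, because a thin arc
   never ends in a source (starts in a sink), and transitivity of the vertex
   (repr s, repr t) yields disimpliciality. *)

Lemma nbhdC (H : digraph) (a b : vert H) : (a \in nbhd b) = (b \in nbhd a).
Proof. by rewrite !inE orbC. Qed.

Section JoinVertices.
Variable K : digraph.

Lemma join_vert_fst (c : vert K) :
  (forall z, ~~ thin_arc z c) -> exists q : join_vert K, (val q).1 = c.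
Proof.
move=> no_thin_in; have [/existsP[z /orP[hz|hz]]|unmatched] := boolP (in_thin_matching c).
- have ok : join_ok (c, z) by rewrite /join_ok /= hz orbT.
  by exists (exist (@join_ok K) _ ok).
- by have := no_thin_in z; rewrite hz.
- have ok : join_ok (c, c) by rewrite /join_ok /= eqxx unmatched.
  by exists (exist (@join_ok K) _ ok).
Qed.

Lemma join_vert_snd (c : vert K) :
  (forall z, ~~ thin_arc c z) -> exists q : join_vert K, (val q).2 = c.
Proof.
move=> no_thin_out; have [/existsP[z /orP[hz|hz]]|unmatched] := boolP (in_thin_matching c).
- by have := no_thin_out z; rewrite hz.
- have ok : join_ok (z, c) by rewrite /join_ok /= hz orbT.
  by exists (exist (@join_ok K) _ ok).
- have ok : join_ok (c, c) by rewrite /join_ok /= eqxx unmatched.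
  by exists (exist (@join_ok K) _ ok).
Qed.

Lemma join_transitive (p : vert (DJoin K)) :
  (forall x y, edge x (val p).2 -> edge (val p).1 y -> edge x y) ->
  transitive_vertex p.
Proof. by move=> htr q q'; rewrite !inE; apply: htr. Qed.

End JoinVertices.

Section Representatives.
Variables (H : digraph) (r : vert H -> vert H).
Hypothesis hr : is_repr r.

Lemma nbhd_repr a b : (a \in nbhd (r b)) = (a \in nbhd b).
Proof. by rewrite hr.1. Qed.

Lemma repr_in_nbhd a b : (r a \in nbhd b) = (a \in nbhd b).
Proof. by rewrite nbhdC nbhd_repr nbhdC. Qed.

Lemma repr_idem a : r (r a) = r a.
Proof. exact/hr.2/hr.1. Qed.

Definition rep a : vert (DRepr r) := exist _ (r a) (introT eqP (repr_idem a)).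

Lemma nbhd_DRepr (c d : vert (DRepr r)) : (d \in nbhd c) = (val d \in nbhd (val c)).
Proof. by rewrite !inE. Qed.

Lemma deg_DRepr_proper (c d : vert (DRepr r)) :
  nbhd (val c) \proper nbhd (val d) -> deg c < deg d.
Proof.
move=> cd; apply/proper_card/properP; split.
  by apply/subsetP => x; rewrite !nbhd_DRepr; apply: (subsetP (proper_sub cd)).
have [_ [u du cu]] := properP cd.
by exists (rep u); rewrite nbhd_DRepr /= repr_in_nbhd.
Qed.

(* Distinct representatives have distinct neighbourhoods, which turns the
   inclusions into strict ones. *)
Lemma thin_nb_rep a b : b \in nbhd a ->
  (forall z, z \in nbhd a -> nbhd b \subset nbhd z) ->
  thin_nb (rep a) (rep b).
Proof.
move=> ab sub; rewrite /thin_nb nbhd_DRepr /= nbhd_repr repr_in_nbhd ab /=.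
apply/forall_inP => z; rewrite nbhd_DRepr /= nbhd_repr => az.
apply/implyP => zb; apply: deg_DRepr_proper => /=.
rewrite hr.1 properEneq sub // andbT.
apply: contra zb => /eqP nbhd_bz; apply/eqP/val_inj => /=.
by rewrite (hr.2 _ _ nbhd_bz) (eqP (valP z)).
Qed.

End Representatives.

Section STGraph.
Variables (H : digraph) (side : vert H -> bool).
Hypothesis edge_side : forall a b, edge a b -> side a && ~~ side b.
Hypothesis nbhd_nonempty : forall u : vert H, exists c, c \in nbhd u.
Variable r : vert H -> vert H.
Hypothesis hr : is_repr r.

Lemma nbhd_side a b : b \in nbhd a -> side a != side b.
Proof. by rewrite !inE => /orP[] /edge_side /andP[] -> /negbTE ->. Qed.

Lemma nbhd_src u : side u -> nbhd u = outN u.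
Proof.
move=> su; apply/setP => x; rewrite !inE orbC.
by case ex: (edge x u) => //; have /andP[_] := edge_side ex; rewrite su.
Qed.

Lemma nbhd_snk u : ~~ side u -> nbhd u = inN u.
Proof.
move=> su; apply/setP => x; rewrite !inE.
by case ux: (edge u x) => //; have /andP[] := edge_side ux; rewrite (negbTE su).
Qed.

Lemma side_repr u : side (r u) = side u.
Proof.
have [c cu] := nbhd_nonempty u.
have cru : c \in nbhd (r u) by rewrite nbhd_repr.
by move: (nbhd_side cu) (nbhd_side cru); case: (side u) (side (r u)) (side c) => [] [] [].
Qed.

Lemma edge_repr_r a b : edge a (r b) = edge a b.
Proof.
have [sb|sb] := boolP (side b).
  by apply/idP/idP => /edge_side /andP[_]; rewrite ?side_repr sb.
have srb : ~~ side (r b) by rewrite side_repr.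
by have := nbhd_repr hr a b; rewrite nbhd_snk // nbhd_snk // !inE.
Qed.

Lemma edge_repr_l a b : edge (r a) b = edge a b.
Proof.
have [sa|sa] := boolP (side a); last first.
  by apply/idP/idP => /edge_side /andP[]; rewrite ?side_repr (negbTE sa).
have sra : side (r a) by rewrite side_repr.
by have := nbhd_repr hr b a; rewrite nbhd_src // nbhd_src // !inE.
Qed.

Lemma disimplicial_nbhd_sub (s t : vert H) : edge s t -> disimplicial s t ->
  (forall z, z \in nbhd s -> nbhd t \subset nbhd z) /\
  (forall z, z \in nbhd t -> nbhd s \subset nbhd z).
Proof.
move=> st dst; have /andP[ss nst] := edge_side st.
split=> z; [rewrite nbhd_src // => sz | rewrite nbhd_snk // => zt].
- by apply/subsetP => x; rewrite nbhd_snk // => xt; rewrite !inE (dst _ _ xt sz) orbT.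
- by apply/subsetP => x; rewrite nbhd_src // => sx; rewrite !inE (dst _ _ zt sx).
Qed.

Lemma disimplicial_thin_arc (s t : vert H) : edge s t -> disimplicial s t ->
  thin_arc (rep hr s) (rep hr t).
Proof.
move=> st dst; have [sub_s sub_t] := disimplicial_nbhd_sub st dst.
have ts : t \in nbhd s by rewrite !inE st.
apply/and3P; split.
- by rewrite /= edge_repr_r edge_repr_l.
- exact: thin_nb_rep.
- by apply: thin_nb_rep => //; rewrite nbhdC.
Qed.

Lemma no_thin_arc_into_src (x : vert H) : side x -> forall z, ~~ thin_arc z (rep hr x).
Proof.
by move=> sx z; apply/negP => /and3P[/edge_side /andP[_]]; rewrite /= side_repr sx.
Qed.

Lemma no_thin_arc_from_snk (y : vert H) : ~~ side y -> forall z, ~~ thin_arc (rep hr y) z.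
Proof.
move=> sy z; apply/negP => /and3P[/edge_side /andP[]].
by rewrite /= side_repr (negbTE sy).
Qed.

Lemma disimplicial_iff_join_transitive (s t : vert H) : edge s t ->
  disimplicial s t <->
  exists p : vert (DJoin (DRepr r)),
    (val (val p).1, val (val p).2) = (r s, r t) /\ transitive_vertex p.
Proof.
move=> st; split=> [dst | [p [[p1 p2] ptr]] x y xt sy].
- have ok : join_ok (rep hr s, rep hr t) by rewrite /join_ok disimplicial_thin_arc ?orbT.
  exists (exist (@join_ok _) _ ok); split=> //.
  apply: join_transitive => x y /=; rewrite edge_repr_r edge_repr_l => xt sy.
  by apply: dst; rewrite inE.
- rewrite !inE in xt sy.
  have /andP[sx _] := edge_side xt; have /andP[_ sy'] := edge_side sy.
  have [q q1] := join_vert_fst (no_thin_arc_into_src sx).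
  have [q' q2] := join_vert_snd (no_thin_arc_from_snk sy').
  have := ptr q q'; rewrite !inE /= q1 q2 p1 p2 /= !edge_repr_l !edge_repr_r.
  by apply.
Qed.

End STGraph.

Section Split.
Variable G : digraph.

Definition split_side (x : vert (DSplit G)) : bool :=
  if val x is inl _ then true else false.

Lemma split_arc_side (c d : vert (DSplit G)) :
  edge c d -> split_side c && ~~ split_side d.
Proof. by case: c d => [[x|x] ?] [[y|y] ?]. Qed.

Lemma split_nbhd_nonempty (u : vert (DSplit G)) : exists c, c \in nbhd u.
Proof.
case: u => [[x|x] okx]; have /set0Pn[y] := okx; rewrite inE => hy.
- have ok : split_ok (inr y : vert G + vert G) by apply/set0Pn; exists x; rewrite inE.
  by exists (exist (@split_ok G) _ ok); rewrite !inE /= /split_arc /= hy.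
- have ok : split_ok (inl y : vert G + vert G) by apply/set0Pn; exists x; rewrite inE.
  by exists (exist (@split_ok G) _ ok); rewrite !inE /= /split_arc /= hy.
Qed.

Lemma split_disimplicial v w (s t : vert (DSplit G)) :
  val s = inl v -> val t = inr w -> disimplicial v w <-> disimplicial s t.
Proof.
move=> hs ht; split=> [dvw | dst x y xw vy].
- case=> [[x|x] ?] [[y|y] ?]; rewrite !inE /= /split_arc /= ?hs ?ht // => xw vy.
  by apply: dvw; rewrite inE.
- rewrite !inE in xw vy.
  have okx : split_ok (inl x : vert G + vert G) by apply/set0Pn; exists w; rewrite inE.
  have oky : split_ok (inr y : vert G + vert G) by apply/set0Pn; exists v; rewrite inE.
  have := dst (exist (@split_ok G) _ okx) (exist (@split_ok G) _ oky).
  by rewrite !inE /= /split_arc /= hs ht; apply.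
Qed.

End Split.

Theorem theorem9 (G : digraph) (v w : vert G) (vw : edge v w)
    (r : vert (DSplit G) -> vert (DSplit G)) (hr : is_repr r)
    (s t : vert (DSplit G)) (hs : val s = inl v) (ht : val t = inr w) :
  disimplicial v w <->
  exists p : vert (DJoin (DRepr r)),
    (val (val p).1, val (val p).2) = (r s, r t) /\ transitive_vertex p.
Proof.
have st : edge s t by rewrite /= /split_arc hs ht.
apply: iff_trans (split_disimplicial hs ht) _.
exact: (@disimplicial_iff_join_transitive _ _ (@split_arc_side G)
         (@split_nbhd_nonempty G) _ hr _ _ st).
Qed.
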